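(* Let $\mathcal H=(V,E)$ be a hypergraph with splitting functions, let $R\subseteq V$, $\varepsilon>0$ and $\alpha>0$. Then the set $S_L$ returned by Algorithm 2 satisfies $$S_L\in\arg\min_{S\subseteq V}\mathrm{Hstcut}_\alpha(S).$$
   Context: A hypergraph $\mathcal H=(V,E)$ has a finite node set $V$, and each hyperedge $e\in E$ is a subset of $V$. Each hyperedge $e$ carries a splitting function $w_e:2^e\to\mathbb R_{\ge0}$ satisfying $w_e(A)=w_e(e\setminus A)$ for all $A\subseteq e$ and $w_e(\emptyset)=w_e(e)=0$. For $S\subseteq V$, $\mathrm{cut}_{\mathcal H}(S)=\sum_{e\in E}w_e(e\cap S)$. The degree of $v$ is $d_v=\sum_{e\ni v}w_e(\{v\})$, and $\mathrm{vol}(S)=\sum_{v\in S}d_v$. Write $\bar S=V\setminus S$. For $\alpha>0$, $\mathrm{Hstcut}_\alpha(S)=\mathrm{cut}_{\mathcal H}(S)+\alpha\,\mathrm{vol}(\bar S\cap R)+\alpha\varepsilon\,\mathrm{vol}(S\cap\bar R)$. This is the $s$-$t$ cut value of $S\cup\{s\}$ in the hypergraph $\mathcal H_\alpha$ obtained from $\mathcal H$ by adding terminal edges $(s,r)$ of weight $\alpha d_r$ for $r\in R$ and $(j,t)$ of weight $\alpha\varepsilon d_j$ for $j\in\bar R$. Neighborhood notation: $E(v)=\{e\in E: v\in e\}$ and $E(S)=\bigcup_{v\in S}E(v)$. Also $\mathcal N(v)=\{u: \exists e\in E,\ u,v\in e\}$ and $\mathcal N(S)=\bigcup_{v\in S}\mathcal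 N(v)$. A local hypergraph is given by a node set $V_L\subseteq V$ and a hyperedge set $E_L\subseteq E$, with every $e\in E_L$ contained in $V_L$. Every node of $V_L$ keeps its terminal edge. For $S\subseteq V_L$, its cut value is $$\mathrm{Lstcut}_\alpha(S)=\sum_{e\in E_L}w_e(e\cap S)+\alpha\sum_{v\in V_L\cap R,\,v\notin S}d_v+\alpha\varepsilon\sum_{v\in V_L\cap\bar R,\,v\in S}d_v.$$ Algorithm 2 works as follows. Initialize $V_L=R\cup\mathcal N(R)$, $E_L=E(R)$, and $X=\emptyset$. Then repeat: 1. Compute $S_L\in\arg\min_{S\subseteq V_L}\mathrm{Lstcut}_\alpha(S)$. 2. Set $N=(S_L\cap\bar R)\setminus X$. 3. Update $V_L\leftarrow V_L\cup\mathcal N(N)$, $E_L\leftarrow E_L\cup E(N)$, and $X\leftarrow X\cup N$. Stop when $N=\emptyset$ and return $S_L$. *)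

From HB Require Import structures.
From mathcomp Require Import all_boot all_order all_algebra.
Set Implicit Arguments. Unset Strict Implicit. Unset Printing Implicit Defensive.
Import Order.TTheory GRing.Theory Num.Theory.
Local Open Scope ring_scope.

(* Splitting
   functions [w e : {set V} -> R], only meaningful on subsets of [edge e]. *)

Section Hyper.
Variables (R : realFieldType) (V E : finType) (edge : E -> {set V})
          (w : E -> {set V} -> R).

Definition splitting_functions : Prop :=
  forall e : E,
    [/\ (forall A : {set V}, A \subset edge e -> 0 <= w e A),
        (forall A : {set V}, A \subset edge e -> w e A = w e (edge e :\: A)),
        w e set0 = 0 & w e (edge e) = 0].

Definition hcut (S : {set V}) : R := \sum_(e : E) w e (edge e :&: S).

Definition deg (v : V) : R := \sum_(e : E | v \in edge e) w e [set v].

Definition vol (S : {set V}) : R := \sum_(v in S) deg v.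

Variables (Rs : {set V}) (alpha eps : R).

Definition Hstcut (S : {set V}) : R :=
  hcut S + alpha * vol (~: S :&: Rs) + alpha * eps * vol (S :&: ~: Rs).

Definition edges_of (S : {set V}) : {set E} :=
  [set e | [exists v in S, v \in edge e]].

Definition nbhd (S : {set V}) : {set V} :=
  [set u | [exists e : E, [exists v in S, (u \in edge e) && (v \in edge e)]]].

Definition Lstcut (VL : {set V}) (EL : {set E}) (S : {set V}) : R :=
  \sum_(e in EL) w e (edge e :&: S)
  + alpha * \sum_(v in VL :&: Rs :\: S) deg v
  + alpha * eps * \sum_(v in VL :&: ~: Rs :&: S) deg v.

Definition local_argmin (VL : {set V}) (EL : {set E}) (SL : {set V}) : Prop :=
  SL \subset VL /\
  forall S : {set V}, S \subset VL -> Lstcut VL EL SL <= Lstcut VL EL S.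

(* [alg2_returns VL EL X SL]: starting the loop of Algorithm 2 from state
   (VL, EL, X), some execution (with any choice of minimizers) stops and
   returns SL. *)
Inductive alg2_returns : {set V} -> {set E} -> {set V} -> {set V} -> Prop :=
| alg2_stop VL EL X SL :
    local_argmin VL EL SL ->
    (SL :&: ~: Rs) :\: X = set0 ->
    alg2_returns VL EL X SL
| alg2_step VL EL X SL SL' :
    local_argmin VL EL SL ->
    (SL :&: ~: Rs) :\: X != set0 ->
    alg2_returns (VL :|: nbhd ((SL :&: ~: Rs) :\: X))
                 (EL :|: edges_of ((SL :&: ~: Rs) :\: X))
                 (X :|: ((SL :&: ~: Rs) :\: X)) SL' ->
    alg2_returns VL EL X SL'.

Definition alg2_output (SL : {set V}) : Prop :=
  alg2_returns (Rs :|: nbhd Rs) (edges_of Rs) set0 SL.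

End Hyper.

From HB Require Import structures.
From mathcomp Require Import all_boot all_order all_algebra.
Import Order.TTheory GRing.Theory Num.Theory.
Local Open Scope ring_scope.

(* Along the run of Algorithm 2 the local hypergraph keeps three properties:
   it contains R, it contains every hyperedge meeting R or an explored node of
   X, and its hyperedges lie inside V_L.  Restricting any S to V_L and
   discarding the hyperedges outside E_L only lowers the cut, so
   Lstcut(S ∩ V_L) <= Hstcut(S).  When the algorithm stops, S_L ⊆ R ∪ X, so
   every hyperedge that S_L cuts is local and Hstcut(S_L) = Lstcut(S_L); the
   local minimality of S_L then gives Hstcut(S_L) <= Hstcut(S) for all S. *)

Lemma sumr_le_subset (R : numDomainType) (T : finType) (A B : {set T})
    (f : T -> R) :
  A \subset B -> {in B, forall x, 0 <= f x} ->
  \sum_(x in A) f x <= \sum_(x in B) f x.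
Proof.
move=> sAB f_ge0; rewrite [X in _ <= X](big_setID A) /= (setIidPr sAB).
by rewrite lerDl; apply: sumr_ge0 => x; rewrite inE => /andP[_ /f_ge0].
Qed.

Section Algorithm2.
Set Implicit Arguments.
Variables (R : realFieldType) (V E : finType) (edge : E -> {set V})
          (w : E -> {set V} -> R).

Lemma edges_ofU (A B : {set V}) :
  edges_of edge (A :|: B) = edges_of edge A :|: edges_of edge B.
Proof.
apply/setP => e; rewrite !inE; apply/existsP/orP.
  by case=> v /andP[]; rewrite inE => /orP[] vAB ve; [left|right];
     apply/existsP; exists v; rewrite vAB ve.
by case=> /existsP[v /andP[vAB ve]]; exists v; rewrite inE vAB ?orbT ve.
Qed.

Lemma edges_ofS (A B : {set V}) :
  A \subset B -> edges_of edge A \subset edges_of edge B.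
Proof. by move/setUidPr => <-; rewrite edges_ofU subsetUl. Qed.

Lemma edges_of_sub_nbhd (S : {set V}) (e : E) :
  e \in edges_of edge S -> edge e \subset nbhd edge S.
Proof.
rewrite inE => /existsP[v /andP[vS ve]].
apply/subsetP => u ue; rewrite inE; apply/existsP; exists e.
by apply/existsP; exists v; rewrite vS ue ve.
Qed.

Hypothesis hw : splitting_functions edge w.

Lemma splitting_ge0 (e : E) (A : {set V}) : 0 <= w e (edge e :&: A).
Proof. by case: (hw e) => w_ge0 _ _ _; apply/w_ge0/subsetIl. Qed.

Lemma deg_ge0 (v : V) : 0 <= deg edge w v.
Proof.
apply: sumr_ge0 => e ve; case: (hw e) => w_ge0 _ _ _.
by apply: w_ge0; rewrite sub1set.
Qed.

Lemma hcut_local (EL : {set E}) (S : {set V}) :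
  edges_of edge S \subset EL ->
  hcut edge w S = \sum_(e in EL) w e (edge e :&: S).
Proof.
move=> sES; rewrite /hcut (bigID (mem EL)) /= [X in _ + X]big1 ?addr0 //.
move=> e eEL; have -> : edge e :&: S = set0.
  apply/setP => v; rewrite !inE; apply/negbTE/andP => -[ve vS].
  by move/negP: eEL; apply; apply: (subsetP sES); rewrite inE;
     apply/existsP; exists v; rewrite vS ve.
by case: (hw e).
Qed.

Variables (Rs : {set V}) (alpha eps : R).
Hypotheses (alpha_ge0 : 0 <= alpha) (eps_ge0 : 0 <= eps).

Local Notation Hstcut := (Hstcut edge w Rs alpha eps).
Local Notation Lstcut := (Lstcut edge w Rs alpha eps).

Lemma Lstcut_le_Hstcut (VL : {set V}) (EL : {set E}) (S : {set V}) :
  (forall e, e \in EL -> edge e \subset VL) -> Lstcut VL EL (S :&: VL) <= Hstcut S.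
Proof.
move=> sEV; have deg_in_ge0 (A : {set V}) : {in A, forall v, 0 <= deg edge w v}.
  by move=> v _; apply: deg_ge0.
rewrite /Lstcut /Hstcut /hcut /vol; apply: lerD; [apply: lerD|].
- rewrite [X in _ <= X](bigID (mem EL)) /= ler_wpDr ?sumr_ge0 // => [e _|].
    exact: splitting_ge0.
  apply: ler_sum => e /sEV sEeV; rewrite setIA.
  by rewrite (setIidPl (subset_trans (subsetIl _ _) sEeV)).
- apply: ler_wpM2l => //; apply: sumr_le_subset (deg_in_ge0 _).
  by apply/subsetP => v; rewrite !inE; case: (v \in S); case: (v \in Rs); case: (v \in VL).
- rewrite ler_wpM2l ?mulr_ge0 //; apply: sumr_le_subset (deg_in_ge0 _).
  by apply/subsetP => v; rewrite !inE; case: (v \in S); case: (v \in Rs); case: (v \in VL).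
Qed.

Lemma Hstcut_local (VL : {set V}) (EL : {set E}) (S : {set V}) :
  Rs \subset VL -> S \subset VL -> edges_of edge S \subset EL ->
  Hstcut S = Lstcut VL EL S.
Proof.
move=> sRV sSV sES; rewrite /Hstcut /Lstcut /vol (hcut_local sES).
have -> : ~: S :&: Rs = VL :&: Rs :\: S.
  apply/setP => v; rewrite !inE.
  by case vR: (v \in Rs); rewrite ?(subsetP sRV v vR) /= ?andbF ?andbT.
suff -> : S :&: ~: Rs = VL :&: ~: Rs :&: S by [].
apply/setP => v; rewrite !inE.
by case vS: (v \in S); rewrite ?(subsetP sSV v vS) /= ?andbF ?andbT.
Qed.

Definition alg2_invariant (VL : {set V}) (EL : {set E}) (X : {set V}) : Prop :=
  [/\ Rs \subset VL, edges_of edge (Rs :|: X) \subset EL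
    & forall e, e \in EL -> edge e \subset VL].

Lemma alg2_invariant_init :
  alg2_invariant (Rs :|: nbhd edge Rs) (edges_of edge Rs) set0.
Proof.
split; first exact: subsetUl.
  by rewrite setU0.
by move=> e /edges_of_sub_nbhd sEN; apply: subset_trans sEN (subsetUr _ _).
Qed.

Lemma alg2_invariant_step (VL : {set V}) (EL : {set E}) (X N : {set V}) :
  alg2_invariant VL EL X ->
  alg2_invariant (VL :|: nbhd edge N) (EL :|: edges_of edge N) (X :|: N).
Proof.
case=> sRV sEL sEV; split.
- exact: subset_trans sRV (subsetUl _ _).
- by rewrite setUA edges_ofU setUSS.
- move=> e; rewrite inE => /orP[/sEV sEeV | /edges_of_sub_nbhd sEN].
    exact: subset_trans sEeV (subsetUl _ _).
  exact: subset_trans sEN (subsetUr _ _).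
Qed.

Lemma alg2_stop_Hstcut_min (VL : {set V}) (EL : {set E}) (X SL : {set V}) :
  alg2_invariant VL EL X -> local_argmin edge w Rs alpha eps VL EL SL ->
  (SL :&: ~: Rs) :\: X = set0 -> forall S, Hstcut SL <= Hstcut S.
Proof.
case=> sRV sEL sEV [sSV SL_min] /eqP; rewrite setD_eq0 => sSX S.
have sSRX : SL \subset Rs :|: X.
  apply/subsetP => v vS; rewrite inE; case: (boolP (v \in Rs)) => //= vR.
  by apply: (subsetP sSX); rewrite !inE vS vR.
rewrite (Hstcut_local sRV sSV (subset_trans (edges_ofS sSRX) sEL)).
exact: le_trans (SL_min _ (subsetIr _ _)) (Lstcut_le_Hstcut S sEV).
Qed.

Lemma alg2_returns_Hstcut_min (VL : {set V}) (EL : {set E}) (X SL : {set V}) :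
  alg2_returns edge w Rs alpha eps VL EL X SL -> alg2_invariant VL EL X ->
  forall S, Hstcut SL <= Hstcut S.
Proof.
elim=> {VL EL X SL} [VL EL X SL SL_min stop inv | VL EL X SL SL' _ _ _ IH inv].
  exact: alg2_stop_Hstcut_min inv SL_min stop.
exact/IH/alg2_invariant_step.
Qed.

End Algorithm2.

Theorem theorem2 (R : realFieldType) (V E : finType) (edge : E -> {set V})
    (w : E -> {set V} -> R) (Rs : {set V}) (eps alpha : R)
    (hw : splitting_functions edge w) (heps : 0 < eps) (halpha : 0 < alpha)
    (SL : {set V}) :
  alg2_output edge w Rs alpha eps SL ->
  forall S : {set V}, Hstcut edge w Rs alpha eps SL <= Hstcut edge w Rs alpha eps S.
Proof.
move=> run; apply: (alg2_returns_Hstcut_min hw (ltW halpha) (ltW heps) run).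
exact: alg2_invariant_init.
Qed.
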